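(* Let $\mathcal H_1,\dots,\mathcal H_7,\mathcal H_E$ be finite-dimensional complex Hilbert spaces and $|\psi\rangle\in\mathcal H_1\otimes\cdots\otimes\mathcal H_7\otimes\mathcal H_E$. For each $k\in[7]$ let $X_k,Z_k$ be Hermitian operators on $\mathcal H_k$ (extended by the identity to the whole space). Define $\tilde S_1=X_4X_5X_6X_7$, $\tilde S_2=X_2X_3X_6X_7$, $\tilde S_3=X_1X_3X_5X_7$, $\tilde S_4=X_1X_2X_5X_6$, $\tilde S_5=Z_4Z_5Z_6Z_7$, $\tilde S_6=Z_2Z_3Z_6Z_7$, $\tilde S_7=Z_1Z_3Z_5Z_7$, $\tilde S_8=Z_1Z_2Z_5Z_6$. Assume (i) $X_kZ_k+Z_kX_k=0$ for $k\in\{2,3,5,7\}$; (ii) $\tilde S_k|\psi\rangle=|\psi\rangle$ for all $k\in[8]$; (iii) $X_k^2=Z_k^2=I$ for $k\in\{1,4,6\}$. Then for every $k\in[7]$: $X_k^2|\psi\rangle=Z_k^2|\psi\rangle=|\psi\rangle$ and $(X_kZ_k+Z_kX_k)|\psi\rangle=0$.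
   Context: Operators acting on different tensor factors commute. *)

From HB Require Import structures.
From mathcomp Require Import all_boot all_order all_algebra.
From mathcomp Require Export mxtens.
Set Implicit Arguments. Unset Strict Implicit. Unset Printing Implicit Defensive.
Import Order.TTheory GRing.Theory Num.Theory.
Local Open Scope ring_scope.

(* Finite-dimensional complex Hilbert spaces H_1,...,H_7,H_E are modelled as
   C^(d1), ..., C^(d7), C^(dE) over a numeric algebraically closed field C
   (e.g. complex R for R : realType, or algC).  The total space
   H_1 (x) ... (x) H_7 (x) H_E is C^(d1*(d2*(...*(d7*dE)))) via the Kronecker
   product tensmx (notation *t) of mxtens. *)

Definition totdim (d1 d2 d3 d4 d5 d6 d7 dE : nat) : nat :=
  d1 * (d2 * (d3 * (d4 * (d5 * (d6 * (d7 * dE)))))).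

Definition hermitian_op (C : numClosedFieldType) (n : nat) (A : 'M[C]_n) : Prop :=
  map_mx Num.conj (A^T) = A.

Section Lifts.
Variables (C : numClosedFieldType) (d1 d2 d3 d4 d5 d6 d7 dE : nat).
Local Notation I n := (1%:M : 'M[C]_n).

Definition lift1 (A : 'M[C]_d1) : 'M[C]_(totdim d1 d2 d3 d4 d5 d6 d7 dE) :=
  A *t I (d2 * (d3 * (d4 * (d5 * (d6 * (d7 * dE)))))).
Definition lift2 (A : 'M[C]_d2) : 'M[C]_(totdim d1 d2 d3 d4 d5 d6 d7 dE) :=
  I d1 *t (A *t I (d3 * (d4 * (d5 * (d6 * (d7 * dE)))))).
Definition lift3 (A : 'M[C]_d3) : 'M[C]_(totdim d1 d2 d3 d4 d5 d6 d7 dE) :=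
  I d1 *t (I d2 *t (A *t I (d4 * (d5 * (d6 * (d7 * dE)))))).
Definition lift4 (A : 'M[C]_d4) : 'M[C]_(totdim d1 d2 d3 d4 d5 d6 d7 dE) :=
  I d1 *t (I d2 *t (I d3 *t (A *t I (d5 * (d6 * (d7 * dE)))))).
Definition lift5 (A : 'M[C]_d5) : 'M[C]_(totdim d1 d2 d3 d4 d5 d6 d7 dE) :=
  I d1 *t (I d2 *t (I d3 *t (I d4 *t (A *t I (d6 * (d7 * dE)))))).
Definition lift6 (A : 'M[C]_d6) : 'M[C]_(totdim d1 d2 d3 d4 d5 d6 d7 dE) :=
  I d1 *t (I d2 *t (I d3 *t (I d4 *t (I d5 *t (A *t I (d7 * dE)))))).
Definition lift7 (A : 'M[C]_d7) : 'M[C]_(totdim d1 d2 d3 d4 d5 d6 d7 dE) :=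
  I d1 *t (I d2 *t (I d3 *t (I d4 *t (I d5 *t (I d6 *t (A *t I dE)))))).
End Lifts.

Definition local_conclusion (C : numClosedFieldType) (dk N : nat)
  (L : 'M[C]_dk -> 'M[C]_N) (X Z : 'M[C]_dk) (psi : 'cV[C]_N) : Prop :=
  [/\ L (X *m X) *m psi = psi,
      L (Z *m Z) *m psi = psi &
      L (X *m Z + Z *m X) *m psi = 0].

From HB Require Import structures.
From mathcomp Require Import all_boot all_order all_algebra.
From mathcomp Require Import mxtens.
Set Implicit Arguments. Unset Strict Implicit. Unset Printing Implicit Defensive.
Import Order.TTheory GRing.Theory Num.Theory.
Local Open Scope ring_scope.

(* Operators acting on different tensor factors commute, so products of lifted
   operators can be computed factor by factor.  If an involution P commutes with
   Q and P Q psi = psi, then Q psi = P psi and Q^2 psi = psi.  Stripping the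
   involutions X1, X4, X6 off the X-stabilizers this way shows that psi is fixed
   by the products X5^2 X7^2, X2^2 X3^2 X7^2, X3^2 X5^2 X7^2 and X2^2 X5^2.
   These give X3^2 psi = psi, and then (Xk^2)^2 psi = psi for k = 2, 5, 7,
   which forces Xk^2 psi = psi because Xk^2 is positive semidefinite; likewise
   for the Z's.  For k = 1, 4, 6 the same stripping writes Xk psi and Zk psi as
   products of X's and Z's on other factors, and anticommutation on factors
   2, 3, 5, 7 gives (Xk Zk + Zk Xk) psi = 0: for k = 1, 6 three factors
   anticommute, and for k = 4 two do, leaving the anticommutator on factor 6. *)

Section TensorProduct.
Variable R : pzRingType.

Lemma tensmx11 m n : (1%:M : 'M[R]_m) *t (1%:M : 'M[R]_n) = 1%:M.
Proof.
apply/matrixP=> i j.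
case: (mxtens_indexP i)=> i0 i1; case: (mxtens_indexP j)=> j0 j1.
rewrite tensmxE !mxE -natrM mulnb; congr (_ %:R); congr nat_of_bool.
apply/andP/eqP => [[/eqP-> /eqP->] //|].
by move/(can_inj (@mxtens_indexK _ _)) => [-> ->].
Qed.

Variables (m n p q : nat).
Implicit Types (A B : 'M[R]_(m, n)) (D : 'M[R]_(p, q)).

Lemma tensmxDl A B D : (A + B) *t D = A *t D + B *t D.
Proof. by apply/matrixP=> i j; rewrite !mxE mulrDl. Qed.

Lemma tensmxDr A B D : D *t (A + B) = D *t A + D *t B.
Proof. by apply/matrixP=> i j; rewrite !mxE mulrDr. Qed.

Lemma tensmxNl A D : (- A) *t D = - (A *t D).
Proof. by apply/matrixP=> i j; rewrite !mxE mulNr. Qed.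

Lemma tensmxNr A D : D *t (- A) = - (D *t A).
Proof. by apply/matrixP=> i j; rewrite !mxE mulrN. Qed.

End TensorProduct.

Section Stabilizers.
Variables (R : pzRingType) (n : nat).
Implicit Types (A B D P Q : 'M[R]_n) (v : 'cV[R]_n).

Lemma involution_stab_eq P Q v :
  P *m P = 1%:M -> P *m Q *m v = v -> Q *m v = P *m v.
Proof. by move=> PP PQv; rewrite -{2}PQv !mulmxA PP mul1mx. Qed.

Lemma involution_stab_sqr P Q v :
  P *m P = 1%:M -> P *m Q = Q *m P -> P *m Q *m v = v -> Q *m Q *m v = v.
Proof.
by move=> PP PQ PQv; rewrite -mulmxA (involution_stab_eq PP PQv) mulmxA -PQ.
Qed.

Lemma pairwise_stab_sqr A B D v : A *m B = B *m A ->
  A *m B *m v = v -> A *m D *m v = v -> B *m D *m v = v -> A *m A *m v = v.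
Proof.
move=> AB ABv ADv BDv.
have AAB : A *m A *m B = A *m B *m A by rewrite -!mulmxA AB.
by rewrite -{1}BDv !mulmxA AAB -[_ *m D]mulmxA -mulmxA ADv ABv.
Qed.

Lemma anticomm_transfer Px Pz Qx Qz v :
  Qx *m v = Px *m v -> Qz *m v = Pz *m v ->
  Px *m Qz = Qz *m Px -> Pz *m Qx = Qx *m Pz ->
  (Px *m Pz + Pz *m Px) *m v = (Qz *m Qx + Qx *m Qz) *m v.
Proof.
move=> Qxv Qzv PQxz PQzx.
by rewrite !mulmxDl -!mulmxA -Qxv -Qzv !mulmxA PQxz PQzx -!mulmxA Qxv Qzv.
Qed.

End Stabilizers.

Section Hermitian.
Variable C : numClosedFieldType.

Lemma hermitian_op1 n : hermitian_op (1%:M : 'M[C]_n).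
Proof. by apply/matrixP=> i j; rewrite !mxE rmorph_nat eq_sym. Qed.

Lemma hermitian_op_tensmx m n (A : 'M[C]_m) (B : 'M[C]_n) :
  hermitian_op A -> hermitian_op B -> hermitian_op (A *t B).
Proof. by rewrite /hermitian_op => hA hB; rewrite trmx_tens map_mxT hA hB. Qed.

Lemma hermitian_op_trmx n (M : 'M[C]_n) : hermitian_op M -> hermitian_op M^T.
Proof. by rewrite /hermitian_op trmxK => hM; rewrite -{2}hM map_trmx trmxK. Qed.

Lemma hermitian_op_sqr_eq_opp n (M : 'M[C]_n) (u : 'cV_n) :
  hermitian_op M -> M *m M *m u = - u -> u = 0.
Proof.
(* [dotmx] lives on row vectors, hence the detour through [u^T] and [M^T]. *)
move=> /hermitian_op_trmx hMT MMu; set r := u^T.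
have rMM : r *m M^T *m M^T = - r by rewrite /r -!trmx_mul mulmxA MMu linearN.
have dot_opp : dotmx (r *m M^T) (r *m M^T) = - dotmx r r.
  by rewrite !dotmxE trmx_mul map_mxM hMT mulmxA rMM mulNmx mxE.
have /eqP : dotmx r r = 0.
  apply/le_anti; rewrite (dnorm_ge0 (@dotmx C n)) andbT -oppr_ge0 -dot_opp.
  exact: (dnorm_ge0 (@dotmx C n)).
by rewrite (dnorm_eq0 (@dotmx C n)) => /eqP r0; rewrite -[u]trmxK -/r r0 trmx0.
Qed.

Lemma hermitian_op_sqr_fixed n (M : 'M[C]_n) (v : 'cV_n) :
  hermitian_op M -> M *m M *m (M *m M) *m v = v -> M *m M *m v = v.
Proof.
move=> hM MMMMv; apply/subr0_eq/(hermitian_op_sqr_eq_opp hM).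
by rewrite mulmxBr mulmxA MMMMv opprB.
Qed.

Lemma hermitian_op_pairwise_stab_sqr n (M B D : 'M[C]_n) (v : 'cV_n) :
  hermitian_op M -> M *m M *m B = B *m (M *m M) ->
  M *m M *m B *m v = v -> M *m M *m D *m v = v -> B *m D *m v = v ->
  M *m M *m v = v.
Proof.
move=> hM MMB MMBv MMDv BDv.
exact: (hermitian_op_sqr_fixed hM (pairwise_stab_sqr MMB MMBv MMDv BDv)).
Qed.
End Hermitian.

Section LocalConclusion.
Variables (C : numClosedFieldType) (k n : nat) (L : 'M[C]_k -> 'M[C]_n).
Variables (X Z : 'M[C]_k) (psi : 'cV[C]_n).

Lemma local_conclusion_involutive :
  L 1%:M = 1%:M -> X *m X = 1%:M -> Z *m Z = 1%:M ->
  L (X *m Z + Z *m X) *m psi = 0 -> local_conclusion L X Z psi.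
Proof. by move=> L1 XX ZZ; split; rewrite // ?XX ?ZZ L1 mul1mx. Qed.

Lemma local_conclusion_anticomm :
  L 0 = 0 -> X *m Z + Z *m X = 0 ->
  L (X *m X) *m psi = psi -> L (Z *m Z) *m psi = psi ->
  local_conclusion L X Z psi.
Proof. by move=> L0 XZ; split; rewrite // XZ L0 mul0mx. Qed.
End LocalConclusion.

Section SevenFactors.
Variables (C : numClosedFieldType) (d1 d2 d3 d4 d5 d6 d7 dE : nat).
Local Notation N := (totdim d1 d2 d3 d4 d5 d6 d7 dE).
Local Notation L1 := (lift1 d2 d3 d4 d5 d6 d7 dE).
Local Notation L2 := (lift2 d1 d3 d4 d5 d6 d7 dE).
Local Notation L3 := (lift3 d1 d2 d4 d5 d6 d7 dE).
Local Notation L4 := (lift4 d1 d2 d3 d5 d6 d7 dE).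
Local Notation L5 := (lift5 d1 d2 d3 d4 d6 d7 dE).
Local Notation L6 := (lift6 d1 d2 d3 d4 d5 d7 dE).
Local Notation L7 := (lift7 d1 d2 d3 d4 d5 d6 dE).

Definition tens7 (A1 : 'M[C]_d1) (A2 : 'M[C]_d2) (A3 : 'M[C]_d3)
    (A4 : 'M[C]_d4) (A5 : 'M[C]_d5) (A6 : 'M[C]_d6) (A7 : 'M[C]_d7) : 'M[C]_N :=
  A1 *t (A2 *t (A3 *t (A4 *t (A5 *t (A6 *t (A7 *t (1%:M : 'M[C]_dE))))))).

Lemma tens7M A1 A2 A3 A4 A5 A6 A7 B1 B2 B3 B4 B5 B6 B7 :
  tens7 A1 A2 A3 A4 A5 A6 A7 *m tens7 B1 B2 B3 B4 B5 B6 B7 =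
  tens7 (A1 *m B1) (A2 *m B2) (A3 *m B3) (A4 *m B4)
        (A5 *m B5) (A6 *m B6) (A7 *m B7).
Proof. by rewrite /tens7 !tensmx_mul mulmx1. Qed.

Lemma tens7_1 : tens7 1%:M 1%:M 1%:M 1%:M 1%:M 1%:M 1%:M = 1%:M.
Proof. by rewrite /tens7 !tensmx11. Qed.

Lemma lift1E A : L1 A = tens7 A 1%:M 1%:M 1%:M 1%:M 1%:M 1%:M.
Proof. by rewrite /tens7 !tensmx11. Qed.
Lemma lift2E A : L2 A = tens7 1%:M A 1%:M 1%:M 1%:M 1%:M 1%:M.
Proof. by rewrite /tens7 !tensmx11. Qed.
Lemma lift3E A : L3 A = tens7 1%:M 1%:M A 1%:M 1%:M 1%:M 1%:M.
Proof. by rewrite /tens7 !tensmx11. Qed.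
Lemma lift4E A : L4 A = tens7 1%:M 1%:M 1%:M A 1%:M 1%:M 1%:M.
Proof. by rewrite /tens7 !tensmx11. Qed.
Lemma lift5E A : L5 A = tens7 1%:M 1%:M 1%:M 1%:M A 1%:M 1%:M.
Proof. by rewrite /tens7 !tensmx11. Qed.
Lemma lift6E A : L6 A = tens7 1%:M 1%:M 1%:M 1%:M 1%:M A 1%:M.
Proof. by rewrite /tens7 tensmx11. Qed.
Lemma lift7E A : L7 A = tens7 1%:M 1%:M 1%:M 1%:M 1%:M 1%:M A.
Proof. by []. Qed.

#[local] Hint Rewrite lift1E lift2E lift3E lift4E lift5E lift6E lift7E
  tens7M @mul1mx @mulmx1 : tens7_normal.
Local Ltac tens7_simpl := autorewrite with tens7_normal in *.

Lemma stabilizer_squares X1 X2 X3 X4 X5 X6 X7 (psi : 'cV[C]_N) :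
  hermitian_op X2 -> hermitian_op X3 -> hermitian_op X5 -> hermitian_op X7 ->
  X1 *m X1 = 1%:M -> X4 *m X4 = 1%:M -> X6 *m X6 = 1%:M ->
  L4 X4 *m L5 X5 *m L6 X6 *m L7 X7 *m psi = psi ->
  L2 X2 *m L3 X3 *m L6 X6 *m L7 X7 *m psi = psi ->
  L1 X1 *m L3 X3 *m L5 X5 *m L7 X7 *m psi = psi ->
  L1 X1 *m L2 X2 *m L5 X5 *m L6 X6 *m psi = psi ->
  [/\ L2 (X2 *m X2) *m psi = psi, L3 (X3 *m X3) *m psi = psi,
      L5 (X5 *m X5) *m psi = psi & L7 (X7 *m X7) *m psi = psi].
Proof.
move=> hX2 hX3 hX5 hX7 X11 X44 X66 S1 S2 S3 S4.
have h57 : L5 (X5 *m X5) *m L7 (X7 *m X7) *m psi = psi.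
  have := involution_stab_sqr (P := L4 X4 *m L6 X6) (Q := L5 X5 *m L7 X7)
    (v := psi).
  by tens7_simpl; apply; rewrite ?X44 ?X66 ?tens7_1.
have h237 : L2 (X2 *m X2) *m L3 (X3 *m X3) *m L7 (X7 *m X7) *m psi = psi.
  have := involution_stab_sqr (P := L6 X6) (Q := L2 X2 *m L3 X3 *m L7 X7)
    (v := psi).
  by tens7_simpl; apply; rewrite ?X66 ?tens7_1.
have h357 : L3 (X3 *m X3) *m L5 (X5 *m X5) *m L7 (X7 *m X7) *m psi = psi.
  have := involution_stab_sqr (P := L1 X1) (Q := L3 X3 *m L5 X5 *m L7 X7)
    (v := psi).
  by tens7_simpl; apply; rewrite ?X11 ?tens7_1.
have h25 : L2 (X2 *m X2) *m L5 (X5 *m X5) *m psi = psi.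
  have := involution_stab_sqr (P := L1 X1 *m L6 X6) (Q := L2 X2 *m L5 X5)
    (v := psi).
  by tens7_simpl; apply; rewrite ?X11 ?X66 ?tens7_1.
have h3 : L3 (X3 *m X3) *m psi = psi.
  by rewrite -{1}h57 mulmxA; tens7_simpl.
have h27 : L2 (X2 *m X2) *m L7 (X7 *m X7) *m psi = psi.
  by rewrite -{1}h3 mulmxA; tens7_simpl.
have hL2 : hermitian_op (L2 X2).
  by rewrite /lift2; do ![apply: hermitian_op_tensmx | exact: hermitian_op1].
have hL5 : hermitian_op (L5 X5).
  by rewrite /lift5; do ![apply: hermitian_op_tensmx | exact: hermitian_op1].
have hL7 : hermitian_op (L7 X7).
  by rewrite /lift7; do ![apply: hermitian_op_tensmx | exact: hermitian_op1].
split => //.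
- have := hermitian_op_pairwise_stab_sqr
    (B := L5 (X5 *m X5)) (D := L7 (X7 *m X7)) (v := psi) hL2.
  by tens7_simpl; apply.
- have := hermitian_op_pairwise_stab_sqr
    (B := L7 (X7 *m X7)) (D := L2 (X2 *m X2)) (v := psi) hL5.
  by tens7_simpl; apply.
- have := hermitian_op_pairwise_stab_sqr
    (B := L2 (X2 *m X2)) (D := L5 (X5 *m X5)) (v := psi) hL7.
  by tens7_simpl; apply.
Qed.

Lemma stabilizer_anticomm6 X2 X3 X6 X7 Z2 Z3 Z6 Z7 (psi : 'cV[C]_N) :
  X2 *m Z2 + Z2 *m X2 = 0 -> X3 *m Z3 + Z3 *m X3 = 0 ->
  X7 *m Z7 + Z7 *m X7 = 0 -> X6 *m X6 = 1%:M -> Z6 *m Z6 = 1%:M ->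
  L2 X2 *m L3 X3 *m L6 X6 *m L7 X7 *m psi = psi ->
  L2 Z2 *m L3 Z3 *m L6 Z6 *m L7 Z7 *m psi = psi ->
  L6 (X6 *m Z6 + Z6 *m X6) *m psi = 0.
Proof.
move=> /addr0_eq ZX2 /addr0_eq ZX3 /addr0_eq ZX7 X66 Z66 SX SZ.
have x6 : L2 X2 *m L3 X3 *m L7 X7 *m psi = L6 X6 *m psi.
  by apply: involution_stab_eq; tens7_simpl; rewrite ?X66 ?tens7_1.
have z6 : L2 Z2 *m L3 Z3 *m L7 Z7 *m psi = L6 Z6 *m psi.
  by apply: involution_stab_eq; tens7_simpl; rewrite ?Z66 ?tens7_1.
have -> : L6 (X6 *m Z6 + Z6 *m X6) = L6 X6 *m L6 Z6 + L6 Z6 *m L6 X6.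
  by tens7_simpl; rewrite /tens7 !(tensmxDl, tensmxDr).
have anti : L2 Z2 *m L3 Z3 *m L7 Z7 *m (L2 X2 *m L3 X3 *m L7 X7) =
          - (L2 X2 *m L3 X3 *m L7 X7 *m (L2 Z2 *m L3 Z3 *m L7 Z7)).
  by tens7_simpl; rewrite -ZX2 -ZX3 -ZX7 /tens7 !(tensmxNl, tensmxNr) !opprK.
rewrite (anticomm_transfer x6 z6);
  [by rewrite anti addNr mul0mx | by tens7_simpl | by tens7_simpl].
Qed.

Lemma stabilizer_anticomm1 X1 X3 X5 X7 Z1 Z3 Z5 Z7 (psi : 'cV[C]_N) :
  X3 *m Z3 + Z3 *m X3 = 0 -> X5 *m Z5 + Z5 *m X5 = 0 ->
  X7 *m Z7 + Z7 *m X7 = 0 -> X1 *m X1 = 1%:M -> Z1 *m Z1 = 1%:M ->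
  L1 X1 *m L3 X3 *m L5 X5 *m L7 X7 *m psi = psi ->
  L1 Z1 *m L3 Z3 *m L5 Z5 *m L7 Z7 *m psi = psi ->
  L1 (X1 *m Z1 + Z1 *m X1) *m psi = 0.
Proof.
move=> /addr0_eq ZX3 /addr0_eq ZX5 /addr0_eq ZX7 X11 Z11 SX SZ.
have x1 : L3 X3 *m L5 X5 *m L7 X7 *m psi = L1 X1 *m psi.
  by apply: involution_stab_eq; tens7_simpl; rewrite ?X11 ?tens7_1.
have z1 : L3 Z3 *m L5 Z5 *m L7 Z7 *m psi = L1 Z1 *m psi.
  by apply: involution_stab_eq; tens7_simpl; rewrite ?Z11 ?tens7_1.
have -> : L1 (X1 *m Z1 + Z1 *m X1) = L1 X1 *m L1 Z1 + L1 Z1 *m L1 X1.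
  by tens7_simpl; rewrite /tens7 !(tensmxDl, tensmxDr).
have anti : L3 Z3 *m L5 Z5 *m L7 Z7 *m (L3 X3 *m L5 X5 *m L7 X7) =
          - (L3 X3 *m L5 X5 *m L7 X7 *m (L3 Z3 *m L5 Z5 *m L7 Z7)).
  by tens7_simpl; rewrite -ZX3 -ZX5 -ZX7 /tens7 !(tensmxNl, tensmxNr) !opprK.
rewrite (anticomm_transfer x1 z1);
  [by rewrite anti addNr mul0mx | by tens7_simpl | by tens7_simpl].
Qed.

Lemma stabilizer_anticomm4 X4 X5 X6 X7 Z4 Z5 Z6 Z7 (psi : 'cV[C]_N) :
  X5 *m Z5 + Z5 *m X5 = 0 -> X7 *m Z7 + Z7 *m X7 = 0 ->
  X4 *m X4 = 1%:M -> Z4 *m Z4 = 1%:M ->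
  L4 X4 *m L5 X5 *m L6 X6 *m L7 X7 *m psi = psi ->
  L4 Z4 *m L5 Z5 *m L6 Z6 *m L7 Z7 *m psi = psi ->
  L6 (X6 *m Z6 + Z6 *m X6) *m psi = 0 ->
  L4 (X4 *m Z4 + Z4 *m X4) *m psi = 0.
Proof.
move=> /addr0_eq ZX5 /addr0_eq ZX7 X44 Z44 SX SZ a6.
have x4 : L5 X5 *m L6 X6 *m L7 X7 *m psi = L4 X4 *m psi.
  by apply: involution_stab_eq; tens7_simpl; rewrite ?X44 ?tens7_1.
have z4 : L5 Z5 *m L6 Z6 *m L7 Z7 *m psi = L4 Z4 *m psi.
  by apply: involution_stab_eq; tens7_simpl; rewrite ?Z44 ?tens7_1.
have -> : L4 (X4 *m Z4 + Z4 *m X4) = L4 X4 *m L4 Z4 + L4 Z4 *m L4 X4.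
  by tens7_simpl; rewrite /tens7 !(tensmxDl, tensmxDr).
have e4 : L5 Z5 *m L6 Z6 *m L7 Z7 *m (L5 X5 *m L6 X6 *m L7 X7) +
          L5 X5 *m L6 X6 *m L7 X7 *m (L5 Z5 *m L6 Z6 *m L7 Z7) =
          L5 (X5 *m Z5) *m L7 (X7 *m Z7) *m L6 (X6 *m Z6 + Z6 *m X6).
  tens7_simpl; rewrite -ZX5 -ZX7 /tens7.
  by rewrite !(tensmxNl, tensmxNr, tensmxDl, tensmxDr) opprK addrC.
rewrite (anticomm_transfer x4 z4);
  [by rewrite e4 -[_ *m psi]mulmxA a6 mulmx0 | by tens7_simpl | by tens7_simpl].
Qed.
End SevenFactors.

Theorem mainTheorem5 (C : numClosedFieldType) (d1 d2 d3 d4 d5 d6 d7 dE : nat)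
  (psi : 'cV[C]_(totdim d1 d2 d3 d4 d5 d6 d7 dE))
  (X1 Z1 : 'M[C]_d1) (X2 Z2 : 'M[C]_d2) (X3 Z3 : 'M[C]_d3) (X4 Z4 : 'M[C]_d4)
  (X5 Z5 : 'M[C]_d5) (X6 Z6 : 'M[C]_d6) (X7 Z7 : 'M[C]_d7) :
  hermitian_op X1 -> hermitian_op Z1 -> hermitian_op X2 -> hermitian_op Z2 ->
  hermitian_op X3 -> hermitian_op Z3 -> hermitian_op X4 -> hermitian_op Z4 ->
  hermitian_op X5 -> hermitian_op Z5 -> hermitian_op X6 -> hermitian_op Z6 ->
  hermitian_op X7 -> hermitian_op Z7 ->
  let L1 := lift1 d2 d3 d4 d5 d6 d7 dE in
  let L2 := lift2 d1 d3 d4 d5 d6 d7 dE in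
  let L3 := lift3 d1 d2 d4 d5 d6 d7 dE in
  let L4 := lift4 d1 d2 d3 d5 d6 d7 dE in
  let L5 := lift5 d1 d2 d3 d4 d6 d7 dE in
  let L6 := lift6 d1 d2 d3 d4 d5 d7 dE in
  let L7 := lift7 d1 d2 d3 d4 d5 d6 dE in
  let S1 := L4 X4 *m L5 X5 *m L6 X6 *m L7 X7 in
  let S2 := L2 X2 *m L3 X3 *m L6 X6 *m L7 X7 in
  let S3 := L1 X1 *m L3 X3 *m L5 X5 *m L7 X7 in
  let S4 := L1 X1 *m L2 X2 *m L5 X5 *m L6 X6 in
  let S5 := L4 Z4 *m L5 Z5 *m L6 Z6 *m L7 Z7 in
  let S6 := L2 Z2 *m L3 Z3 *m L6 Z6 *m L7 Z7 in
  let S7 := L1 Z1 *m L3 Z3 *m L5 Z5 *m L7 Z7 in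
  let S8 := L1 Z1 *m L2 Z2 *m L5 Z5 *m L6 Z6 in
  X2 *m Z2 + Z2 *m X2 = 0 -> X3 *m Z3 + Z3 *m X3 = 0 ->
  X5 *m Z5 + Z5 *m X5 = 0 -> X7 *m Z7 + Z7 *m X7 = 0 ->
  S1 *m psi = psi -> S2 *m psi = psi -> S3 *m psi = psi -> S4 *m psi = psi ->
  S5 *m psi = psi -> S6 *m psi = psi -> S7 *m psi = psi -> S8 *m psi = psi ->
  X1 *m X1 = 1%:M -> Z1 *m Z1 = 1%:M -> X4 *m X4 = 1%:M -> Z4 *m Z4 = 1%:M ->
  X6 *m X6 = 1%:M -> Z6 *m Z6 = 1%:M ->
  local_conclusion L1 X1 Z1 psi /\ local_conclusion L2 X2 Z2 psi /\
  local_conclusion L3 X3 Z3 psi /\ local_conclusion L4 X4 Z4 psi /\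
  local_conclusion L5 X5 Z5 psi /\ local_conclusion L6 X6 Z6 psi /\
  local_conclusion L7 X7 Z7 psi.
Proof.
(* Hermiticity is only needed on the anticommuting factors 2, 3, 5, 7. *)
move=> _ _ hX2 hZ2 hX3 hZ3 _ _ hX5 hZ5 _ _ hX7 hZ7 /=.
move=> XZ2 XZ3 XZ5 XZ7 SX1 SX2 SX3 SX4 SZ1 SZ2 SZ3 SZ4 X11 Z11 X44 Z44 X66 Z66.
have [X22 X33 X55 X77] :=
  stabilizer_squares hX2 hX3 hX5 hX7 X11 X44 X66 SX1 SX2 SX3 SX4.
have [Z22 Z33 Z55 Z77] :=
  stabilizer_squares hZ2 hZ3 hZ5 hZ7 Z11 Z44 Z66 SZ1 SZ2 SZ3 SZ4.
have XZ6 := stabilizer_anticomm6 XZ2 XZ3 XZ7 X66 Z66 SX2 SZ2.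
have XZ1 := stabilizer_anticomm1 XZ3 XZ5 XZ7 X11 Z11 SX3 SZ3.
have XZ4 := stabilizer_anticomm4 XZ5 XZ7 X44 Z44 SX1 SZ1 XZ6.
split; [|split; [|split; [|split; [|split; [|split]]]]].
- by apply: local_conclusion_involutive => //; rewrite /lift1 tensmx11.
- by apply: local_conclusion_anticomm => //; rewrite /lift2 tens0mx !tensmx0.
- by apply: local_conclusion_anticomm => //; rewrite /lift3 tens0mx !tensmx0.
- by apply: local_conclusion_involutive => //; rewrite /lift4 !tensmx11.
- by apply: local_conclusion_anticomm => //; rewrite /lift5 tens0mx !tensmx0.
- by apply: local_conclusion_involutive => //; rewrite /lift6 !tensmx11.
- by apply: local_conclusion_anticomm => //; rewrite /lift7 tens0mx !tensmx0.
Qed.
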